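(* Let $B$ be a preorder on $\mathcal{SC}$. Then $\rho\dashv_B\mathsf{dual}(\rho)$ for every $\rho\in\mathcal{SC}$.
   Context: Fix base types $BT$ with preorder $\leq_{\mathsf b}$ and labels $\mathcal L$. Contract terms: $\sigma::=\mathbf 1\mid ?\mathtt t.\sigma\mid !\mathtt t.\sigma\mid !(\sigma).\sigma\mid ?(\sigma).\sigma\mid \sum_{i\in I}?l_i.\sigma_i\mid \bigoplus_{i\in I}!l_i.\sigma_i\mid \mu x.\sigma\mid x$ ($I$ finite nonempty, labels distinct). $\mathcal{SC}$ = closed guarded terms (guarded: in each $\mu x.\sigma'$, $x$ occurs in $\sigma'$ only under constructors other than $\mu$). A substitution $s$ is a finite partial map from variables to $\mathcal{SC}$; $\sigma s$ replaces free occurrences of $x\in\mathrm{dom}(s)$ by $s(x)$ (under $\mu y$ the variable $y$ is removed from the domain). LTS: $\mathbf 1\xrightarrow\checkmark$; $\lambda.\sigma\xrightarrow\lambda\sigma$ for prefixes (including $!l.\sigma$); $\bigoplus_{i\in I}!l_i.\sigma_i\xrightarrow\tau!l_i.\sigma_i$ for $|I|>1$; $\sum ?l_i.\sigma_i\xrightarrow{?l_i}\sigma_i$; $\mu x.\sigma\xrightarrow\tau\sigma[\mu x.\sigma/x]$. $\lambda_1\bowtie_B\lambda_2$ iff the pair is $(!l,?l)$, $(?l,!l)$, $(!\mathtt t_1,?\mathtt t_2)$ with $\mathtt t_1\leq_{\mathsf b}\mathtt t_2$, $(?\mathtt t_1,!\mathtt t_2)$ with $\mathtt t_2\leq_{\mathsf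 b}\mathtt t_1$, $(!(\sigma_1),?(\sigma_2))$ with $\sigma_1B\sigma_2$, $(?(\sigma_1),!(\sigma_2))$ with $\sigma_2B\sigma_1$. $\rho\|\sigma\xrightarrow\tau_B$ by a $\tau$ of either side, or $\rho\|\sigma\xrightarrow\tau_B\rho'\|\sigma'$ if $\rho\xrightarrow{\lambda_1}\rho'$, $\sigma\xrightarrow{\lambda_2}\sigma'$, $\lambda_1\bowtie_B\lambda_2$. $\dashv_B$: greatest $R\subseteq\mathcal{SC}^2$ with $\rho R\sigma$ implying (i) if $\rho\|\sigma$ has no $\xrightarrow\tau_B$ move then $\rho\xrightarrow\checkmark$ and $\sigma\xrightarrow\checkmark$; (ii) every $\rho\|\sigma\xrightarrow\tau_B\rho'\|\sigma'$ has $\rho'R\sigma'$. Standard dual $\overline{\cdot}$ (messages unchanged): $\overline{\mathbf 1}=\mathbf 1$, $\overline x=x$, $\overline{\mu x.\sigma}=\mu x.\overline\sigma$, $\overline{?\mathtt t.\sigma}=!\mathtt t.\overline\sigma$, $\overline{!\mathtt t.\sigma}=?\mathtt t.\overline\sigma$, $\overline{?(\sigma^m).\sigma}=!(\sigma^m).\overline\sigma$, $\overline{!(\sigma^m).\sigma}=?(\sigma^m).\overline\sigma$, $\overline{\sum_i ?l_i.\sigma_i}=\bigoplus_i !l_i.\overline{\sigma_i}$, $\overline{\bigoplus_i !l_i.\sigma_i}=\sum_i ?l_i.\overline{\sigma_i}$. M-closure: for $\sigma$ and substitution $s$ with free variables of $\sigma$ in $\mathrm{dom}(s)$, $\mathrm{mclo}(\sigma,s)$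 is: $\mathbf 1\mapsto\mathbf 1$; $x\mapsto x$; $!(\sigma^m).\sigma'\mapsto!(\sigma^m s).\mathrm{mclo}(\sigma',s)$; $?(\sigma^m).\sigma'\mapsto?(\sigma^m s).\mathrm{mclo}(\sigma',s)$; $?\mathtt t.\sigma'\mapsto?\mathtt t.\mathrm{mclo}(\sigma',s)$; $!\mathtt t.\sigma'\mapsto!\mathtt t.\mathrm{mclo}(\sigma',s)$; $\sum_i ?l_i.\sigma_i\mapsto\sum_i ?l_i.\mathrm{mclo}(\sigma_i,s)$; $\bigoplus_i !l_i.\sigma_i\mapsto\bigoplus_i !l_i.\mathrm{mclo}(\sigma_i,s)$; $\mu x.\sigma'\mapsto\mu x.\mathrm{mclo}(\sigma',s')$ where $s'$ maps $x$ to the closed term $(\mu x.\sigma')s$ and agrees with $s$ elsewhere. $\mathrm{mcl}(\sigma)=\mathrm{mclo}(\sigma,\varepsilon)$ ($\varepsilon$ empty substitution), and $\mathsf{dual}(\rho)=\overline{\mathrm{mcl}(\rho)}$. *)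

From Stdlib Require Import List Arith.
Import ListNotations.
Set Implicit Arguments.

Section Contracts.
Variables (BT L : Type).

(* Contract terms; variables are named by nat.
   Ext  = external choice  sum_i ?l_i.s_i  (a single ?l.s is Ext [(l,s)])
   IntC = internal choice  (+)_i !l_i.s_i  (a single !l.s is IntC [(l,s)]) *)
Inductive term : Type :=
| One : term
| InT : BT -> term -> term
| OutT : BT -> term -> term
| InM : term -> term -> term
| OutM : term -> term -> term
| Ext : list (L * term) -> term
| IntC : list (L * term) -> term
| Mu : nat -> term -> term
| Var : nat -> term.

Fixpoint fv (s : term) : list nat :=
  match s with
  | One => []
  | InT _ k | OutT _ k => fv k
  | InM m k | OutM m k => fv m ++ fv k
  | Ext bs | IntC bs => flat_map (fun '(_, k) => fv k) bs
  | Mu x k => filter (fun y => negb (Nat.eqb y x)) (fv k)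
  | Var x => [x]
  end.

Definition closed (s : term) : Prop := fv s = [].

(* [gd x s]: every free occurrence of x in s lies under a constructor other than mu *)
Fixpoint gd (x : nat) (s : term) : Prop :=
  match s with
  | Var y => y <> x
  | Mu y k => y = x \/ gd x k
  | _ => True
  end.

Fixpoint guarded (s : term) : Prop :=
  match s with
  | One | Var _ => True
  | InT _ k | OutT _ k => guarded k
  | InM m k | OutM m k => guarded m /\ guarded k
  | Ext bs | IntC bs => fold_right (fun '(_, k) acc => guarded k /\ acc) True bs
  | Mu x k => gd x k /\ guarded k
  end.

Fixpoint wf (s : term) : Prop :=
  match s with
  | One | Var _ => True
  | InT _ k | OutT _ k => wf k
  | InM m k | OutM m k => wf m /\ wf k
  | Ext bs | IntC bs =>
      bs <> [] /\ NoDup (map fst bs) /\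
      fold_right (fun '(_, k) acc => wf k /\ acc) True bs
  | Mu _ k => wf k
  end.

Definition SC (s : term) : Prop := closed s /\ guarded s /\ wf s.

Definition subst_t := nat -> option term.
Definition eps : subst_t := fun _ => None.
Definition upd (s : subst_t) (x : nat) (t : term) : subst_t :=
  fun y => if Nat.eqb y x then Some t else s y.
Definition rem (s : subst_t) (x : nat) : subst_t :=
  fun y => if Nat.eqb y x then None else s y.

Fixpoint subst (s : subst_t) (t : term) : term :=
  match t with
  | One => One
  | InT b k => InT b (subst s k)
  | OutT b k => OutT b (subst s k)
  | InM m k => InM (subst s m) (subst s k)
  | OutM m k => OutM (subst s m) (subst s k)
  | Ext bs => Ext (map (fun '(l, k) => (l, subst s k)) bs)
  | IntC bs => IntC (map (fun '(l, k) => (l, subst s k)) bs)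
  | Mu x k => Mu x (subst (rem s x) k)
  | Var x => match s x with Some u => u | None => Var x end
  end.

Definition unfold (x : nat) (k : term) : term := subst (upd eps x (Mu x k)) k.

Inductive act : Type :=
| aInT : BT -> act | aOutT : BT -> act
| aInM : term -> act | aOutM : term -> act
| aInL : L -> act | aOutL : L -> act.

Definition ticks (s : term) : Prop := s = One.

Inductive tstep : term -> term -> Prop :=
| ts_int : forall bs l k, 1 < length bs -> In (l, k) bs -> tstep (IntC bs) (IntC [(l, k)])
| ts_mu : forall x k, tstep (Mu x k) (unfold x k).

Inductive vstep : term -> act -> term -> Prop :=
| vs_inT : forall b k, vstep (InT b k) (aInT b) k
| vs_outT : forall b k, vstep (OutT b k) (aOutT b) k
| vs_inM : forall m k, vstep (InM m k) (aInM m) k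
| vs_outM : forall m k, vstep (OutM m k) (aOutM m) k
| vs_ext : forall bs l k, In (l, k) bs -> vstep (Ext bs) (aInL l) k
| vs_outL : forall l k, vstep (IntC [(l, k)]) (aOutL l) k.

Variable leb : BT -> BT -> Prop.

Definition compat (B : term -> term -> Prop) (a1 a2 : act) : Prop :=
  match a1, a2 with
  | aOutL l1, aInL l2 => l1 = l2
  | aInL l1, aOutL l2 => l1 = l2
  | aOutT t1, aInT t2 => leb t1 t2
  | aInT t1, aOutT t2 => leb t2 t1
  | aOutM s1, aInM s2 => B s1 s2
  | aInM s1, aOutM s2 => B s2 s1
  | _, _ => False
  end.

Inductive pair_tau (B : term -> term -> Prop) (r s : term) : term -> term -> Prop :=
| pt_l : forall r', tstep r r' -> pair_tau B r s r' s
| pt_r : forall s', tstep s s' -> pair_tau B r s r s'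
| pt_sync : forall r' s' a1 a2,
    vstep r a1 r' -> vstep s a2 s' -> compat B a1 a2 -> pair_tau B r s r' s'.

Definition is_compliance (B R : term -> term -> Prop) : Prop :=
  forall r s, R r s ->
    SC r /\ SC s /\
    ((~ exists r' s', pair_tau B r s r' s') -> ticks r /\ ticks s) /\
    (forall r' s', pair_tau B r s r' s' -> R r' s').

Definition compliant (B : term -> term -> Prop) (r s : term) : Prop :=
  exists R, is_compliance B R /\ R r s.

Fixpoint bar (t : term) : term :=
  match t with
  | One => One
  | Var x => Var x
  | Mu x k => Mu x (bar k)
  | InT b k => OutT b (bar k)
  | OutT b k => InT b (bar k)
  | InM m k => OutM m (bar k)
  | OutM m k => InM m (bar k)
  | Ext bs => IntC (map (fun '(l, k) => (l, bar k)) bs)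
  | IntC bs => Ext (map (fun '(l, k) => (l, bar k)) bs)
  end.

Fixpoint mclo (s : subst_t) (t : term) : term :=
  match t with
  | One => One
  | Var x => Var x
  | OutM m k => OutM (subst s m) (mclo s k)
  | InM m k => InM (subst s m) (mclo s k)
  | InT b k => InT b (mclo s k)
  | OutT b k => OutT b (mclo s k)
  | Ext bs => Ext (map (fun '(l, k) => (l, mclo s k)) bs)
  | IntC bs => IntC (map (fun '(l, k) => (l, mclo s k)) bs)
  | Mu x k => Mu x (mclo (upd s x (subst s (Mu x k))) k)
  end.

Definition mcl (t : term) : term := mclo eps t.
Definition dual (t : term) : term := bar (mcl t).

End Contracts.

Arguments One {BT L}.

From Pilot Require Import Defs.
From Stdlib Require Import List Arith Relations.
Import ListNotations.

(* The witness relation pairs the tau-derivatives of t with those of dual t, for t in SC.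
   The key fact is that duality commutes with mu-unfolding.  This is where the M-closure
   matters: bar leaves message types untouched, so it commutes with substitution only on
   terms whose messages are closed.  Hence, once t and dual t are unfolded to non-mu heads
   u and v, we get v = dual u, and every tau-derivative of t is an unfolding followed by
   at most one internal choice.  As the heads are dual, at most one side has committed to a
   branch; labels in a choice are distinct, so a synchronisation leads back to a pair
   (r', dual r'), and a pair without tau moves is (1, 1). *)

Section Contracts.
Variables BT L : Type.
Notation T := (term BT L).
Notation sb := (subst_t BT L).
Local Notation map_br f bs := (map (fun '(l, k) => (l, f k)) bs).
Local Notation all_br P bs := (fold_right (fun '(_, k) acc => P k /\ acc) True bs).

Lemma Forall_snd_In (P : T -> Prop) (bs : list (L * T)) :
  Forall (fun p => P (snd p)) bs -> forall l k, In (l, k) bs -> P k.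
Proof. rewrite Forall_forall. intros H l k Hi. exact (H _ Hi). Qed.

Definition term_nested_ind (P : T -> Prop)
  (HOne : P One)
  (HInT : forall b k, P k -> P (InT b k))
  (HOutT : forall b k, P k -> P (OutT b k))
  (HInM : forall m k, P m -> P k -> P (InM m k))
  (HOutM : forall m k, P m -> P k -> P (OutM m k))
  (HExt : forall bs, (forall l k, In (l, k) bs -> P k) -> P (Ext bs))
  (HIntC : forall bs, (forall l k, In (l, k) bs -> P k) -> P (IntC bs))
  (HMu : forall x k, P k -> P (Mu x k))
  (HVar : forall x, P (Var BT L x)) : forall t, P t :=
  fix F t :=
    let branches := fix G bs : Forall (fun p => P (snd p)) bs :=
      match bs with [] => Forall_nil _ | p :: r => Forall_cons p (F (snd p)) (G r) end in
    match t with
    | One => HOne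
    | InT b k => HInT b k (F k)
    | OutT b k => HOutT b k (F k)
    | InM m k => HInM m k (F m) (F k)
    | OutM m k => HOutM m k (F m) (F k)
    | Ext bs => HExt bs (Forall_snd_In P bs (branches bs))
    | IntC bs => HIntC bs (Forall_snd_In P bs (branches bs))
    | Mu x k => HMu x k (F k)
    | Var _ _ x => HVar x
    end.

Lemma in_fv_branches y (bs : list (L * T)) :
  In y (flat_map (fun '(_, k) => fv k) bs) <-> exists l k, In (l, k) bs /\ In y (fv k).
Proof.
  rewrite in_flat_map. split.
  - intros [[l k] [Hi Hy]]. eauto.
  - intros (l & k & Hi & Hy). exists (l, k). auto.
Qed.

Lemma in_fv_Mu x (k : T) y : In y (fv (Mu x k)) <-> In y (fv k) /\ y <> x.
Proof. simpl. rewrite filter_In. destruct (Nat.eqb_spec y x); intuition discriminate. Qed.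

Lemma closed_Mu_fv x (k : T) y : closed (Mu x k) -> In y (fv k) -> y = x.
Proof.
  intros Hc Hy. destruct (Nat.eq_dec y x) as [|Hne]; [assumption|].
  assert (Hin : In y (fv (Mu x k))) by (apply in_fv_Mu; auto).
  unfold closed in Hc. rewrite Hc in Hin. destruct Hin.
Qed.

Lemma closed_incl (t u : T) : closed t -> incl (fv u) (fv t) -> closed u.
Proof. unfold closed. intros Hc Hincl. apply incl_l_nil. rewrite <- Hc. exact Hincl. Qed.

Lemma map_br_ext (f g : T -> T) (bs : list (L * T)) :
  (forall l k, In (l, k) bs -> f k = g k) -> map_br f bs = map_br g bs.
Proof.
  induction bs as [|[l k] bs IH]; intros H; simpl; [reflexivity|].
  rewrite (H l k) by (left; reflexivity). rewrite IH; [reflexivity|].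
  intros l' k' Hi. apply (H l'). right. exact Hi.
Qed.

Lemma map_br_id (f : T -> T) (bs : list (L * T)) :
  (forall l k, In (l, k) bs -> f k = k) -> map_br f bs = bs.
Proof.
  induction bs as [|[l k] bs IH]; intros H; simpl; [reflexivity|].
  rewrite (H l k) by (left; reflexivity). rewrite IH; [reflexivity|].
  intros l' k' Hi. apply (H l'). right. exact Hi.
Qed.

Lemma map_br_map (f g : T -> T) (bs : list (L * T)) :
  map_br f (map_br g bs) = map_br (fun k => f (g k)) bs.
Proof. induction bs as [|[l k] bs IH]; simpl; congruence. Qed.

Lemma map_fst_map_br (f : T -> T) (bs : list (L * T)) : map fst (map_br f bs) = map fst bs.
Proof. induction bs as [|[l k] bs IH]; simpl; congruence. Qed.

Lemma In_map_br (f : T -> T) (bs : list (L * T)) l k' :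
  In (l, k') (map_br f bs) <-> exists k, In (l, k) bs /\ k' = f k.
Proof.
  rewrite in_map_iff. split.
  - intros [[l0 k] [E Hi]]. injection E as <- <-. eauto.
  - intros (k & Hi & ->). exists (l, k). auto.
Qed.

Lemma fv_branches_map (f : T -> T) (bs : list (L * T)) :
  (forall l k, In (l, k) bs -> fv (f k) = fv k) ->
  flat_map (fun '(_, k) => fv k) (map_br f bs) = flat_map (fun '(_, k) => fv k) bs.
Proof.
  induction bs as [|[l k] bs IH]; intros H; simpl; [reflexivity|].
  rewrite (H l k) by (left; reflexivity). rewrite IH; [reflexivity|].
  intros l' k' Hi. apply (H l'). right. exact Hi.
Qed.

Lemma all_br_In (P : T -> Prop) (bs : list (L * T)) l k : all_br P bs -> In (l, k) bs -> P k.
Proof.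
  induction bs as [|[l0 k0] bs IH]; simpl; [tauto|].
  intros [Hk Hbs] [E|Hi]; [injection E as <- <-|]; auto.
Qed.

Lemma all_br_intro (P : T -> Prop) (bs : list (L * T)) :
  (forall l k, In (l, k) bs -> P k) -> all_br P bs.
Proof.
  induction bs as [|[l k] bs IH]; simpl; [tauto|].
  intros H. split; [apply (H l) | apply IH; intros l' k' Hi; apply (H l')]; auto.
Qed.

Lemma all_br_map (P Q : T -> Prop) (f : T -> T) (bs : list (L * T)) :
  (forall l k, In (l, k) bs -> P k -> Q (f k)) -> all_br P bs -> all_br Q (map_br f bs).
Proof.
  induction bs as [|[l k] bs IH]; simpl; [tauto|].
  intros H [Hk Hbs]. split; eauto.
Qed.

Lemma wf_branches_map (f : T -> T) (bs : list (L * T)) :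
  (forall l k, In (l, k) bs -> wf k -> wf (f k)) ->
  bs <> [] /\ NoDup (map fst bs) /\ all_br (@wf BT L) bs ->
  map_br f bs <> [] /\ NoDup (map fst (map_br f bs)) /\ all_br (@wf BT L) (map_br f bs).
Proof.
  intros H (Hne & Hnd & Hw). rewrite map_fst_map_br. repeat split; auto.
  - intros E. apply Hne. eapply map_eq_nil. exact E.
  - eapply all_br_map; [exact H | exact Hw].
Qed.

Lemma NoDup_fst_In_eq (bs : list (L * T)) l a b :
  NoDup (map fst bs) -> In (l, a) bs -> In (l, b) bs -> a = b.
Proof.
  induction bs as [|[l0 k0] bs IH]; simpl; [tauto|].
  intros Hnd Ha Hb. inversion Hnd as [|? ? Hl0 Hnd']; subst.
  assert (Hfresh : forall c, In (l, c) bs -> l <> l0)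
    by (intros c Hc <-; apply Hl0, in_map_iff; exists (l, c); auto).
  destruct Ha as [Ea|Ha], Hb as [Eb|Hb].
  - congruence.
  - injection Ea as -> ->. destruct (Hfresh b Hb); reflexivity.
  - injection Eb as -> ->. destruct (Hfresh a Ha); reflexivity.
  - eauto.
Qed.

(** * Substitutions *)

Definition range_of (P : T -> Prop) (s : sb) : Prop := forall y u, s y = Some u -> P u.
Definition covers (s : sb) (t : T) : Prop := forall y, In y (fv t) -> s y <> None.
Definition override (th et : sb) : sb :=
  fun y => match th y with Some u => Some u | None => et y end.
Definition map_range (f : T -> T) (s : sb) : sb := fun y => option_map f (s y).

Lemma covers_upd_Mu (s : sb) x (k : T) u : covers s (Mu x k) -> covers (upd s x u) k.
Proof.
  intros Hcov y Hy. unfold upd. destruct (Nat.eqb_spec y x); [discriminate|].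
  apply Hcov, in_fv_Mu. auto.
Qed.

Section Ranges.
Context {P : T -> Prop}.

Lemma range_of_eps : range_of P (eps BT L).
Proof. discriminate. Qed.

Lemma range_of_rem (s : sb) x : range_of P s -> range_of P (rem s x).
Proof. unfold range_of, rem. intros H y u. destruct (Nat.eqb y x); [discriminate | apply H]. Qed.

Lemma range_of_upd (s : sb) x u : range_of P s -> P u -> range_of P (upd s x u).
Proof.
  unfold range_of, upd. intros H Hu y v.
  destruct (Nat.eqb y x); [congruence | apply H].
Qed.

Lemma range_of_override (th et : sb) :
  range_of P th -> range_of P et -> range_of P (override th et).
Proof.
  unfold range_of, override. intros Hth Het y u.
  destruct (th y) eqn:E; [intros [= <-]; eauto | apply Het].
Qed.

End Ranges.

Lemma subst_ext (t : T) : forall s s' : sb,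
  (forall y, In y (fv t) -> s y = s' y) -> subst s t = subst s' t.
Proof.
  induction t as [|b k IHk|b k IHk|m k IHm IHk|m k IHm IHk|bs IH|bs IH|x k IHk|x]
    using term_nested_ind; intros s s' Hs; simpl in *; try (f_equal; auto; fail).
  - f_equal; [apply IHm | apply IHk]; intros y Hy; apply Hs, in_or_app; auto.
  - f_equal; [apply IHm | apply IHk]; intros y Hy; apply Hs, in_or_app; auto.
  - f_equal. apply map_br_ext. intros l k Hi. apply (IH l k Hi).
    intros y Hy. apply Hs, in_fv_branches. eauto.
  - f_equal. apply map_br_ext. intros l k Hi. apply (IH l k Hi).
    intros y Hy. apply Hs, in_fv_branches. eauto.
  - f_equal. apply IHk. intros y Hy. unfold rem.
    destruct (Nat.eqb_spec y x); [reflexivity|]. apply Hs, in_fv_Mu. auto.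
  - rewrite (Hs x); auto.
Qed.

Lemma subst_empty (s : sb) (t : T) : (forall y, s y = None) -> subst s t = t.
Proof.
  revert s.
  induction t as [| | | | |bs IH|bs IH|x k IHk|x]
    using term_nested_ind; intros s Hs; simpl; try (f_equal; auto; fail).
  - f_equal. apply map_br_id. intros l k Hi. exact (IH l k Hi s Hs).
  - f_equal. apply map_br_id. intros l k Hi. exact (IH l k Hi s Hs).
  - f_equal. apply IHk. intros y. unfold rem. destruct (Nat.eqb y x); auto.
  - rewrite Hs. reflexivity.
Qed.

Lemma subst_closed (s : sb) (t : T) : closed t -> subst s t = t.
Proof.
  intros Hc. rewrite (subst_ext t s (eps BT L)).
  - apply subst_empty. reflexivity.
  - unfold closed in Hc. rewrite Hc. contradiction.
Qed.

Lemma fv_subst (t : T) : forall (s : sb) y,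
  range_of (@closed BT L) s -> In y (fv (subst s t)) -> In y (fv t) /\ s y = None.
Proof.
  induction t as [|b k IHk|b k IHk|m k IHm IHk|m k IHm IHk|bs IH|bs IH|x k IHk|x]
    using term_nested_ind; intros s y Hs Hy; simpl in *;
    try contradiction; try (eapply IHk; eauto; fail).
  - apply in_app_or in Hy as [Hy|Hy];
      [destruct (IHm s y Hs Hy) | destruct (IHk s y Hs Hy)]; auto using in_or_app.
  - apply in_app_or in Hy as [Hy|Hy];
      [destruct (IHm s y Hs Hy) | destruct (IHk s y Hs Hy)]; auto using in_or_app.
  - apply in_fv_branches in Hy as (l & k' & Hi & Hy). apply In_map_br in Hi as (k & Hi & ->).
    destruct (IH l k Hi s y Hs Hy). split; [apply in_fv_branches; eauto | assumption].
  - apply in_fv_branches in Hy as (l & k' & Hi & Hy). apply In_map_br in Hi as (k & Hi & ->).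
    destruct (IH l k Hi s y Hs Hy). split; [apply in_fv_branches; eauto | assumption].
  - apply filter_In in Hy as [Hy E].
    destruct (IHk (rem s x) y (range_of_rem s x Hs) Hy) as [Hk Hrem]. unfold rem in Hrem.
    destruct (Nat.eqb_spec y x); [discriminate|]. split; [apply in_fv_Mu|]; auto.
  - destruct (s x) eqn:E.
    + apply Hs in E. unfold closed in E. rewrite E in Hy. destruct Hy.
    + destruct Hy as [<-|[]]. auto.
Qed.

Lemma closed_subst (s : sb) (t : T) : range_of (@closed BT L) s -> covers s t -> closed (subst s t).
Proof.
  intros Hs Hc. unfold closed. destruct (fv (subst s t)) as [|y ys] eqn:E; [reflexivity|].
  destruct (fv_subst t s y Hs) as [Hy Hnone]; [rewrite E; left; reflexivity|].
  destruct (Hc y Hy Hnone).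
Qed.

Lemma subst_subst (t : T) : forall th et : sb,
  range_of (@closed BT L) th -> subst et (subst th t) = subst (override th et) t.
Proof.
  induction t as [| | | | |bs IH|bs IH|x k IHk|x]
    using term_nested_ind; intros th et Hth; simpl; try (f_equal; auto; fail).
  - f_equal. rewrite map_br_map. apply map_br_ext. intros l k Hi. exact (IH l k Hi th et Hth).
  - f_equal. rewrite map_br_map. apply map_br_ext. intros l k Hi. exact (IH l k Hi th et Hth).
  - f_equal. rewrite IHk by (apply range_of_rem; exact Hth).
    apply subst_ext. intros y _. unfold override, rem. destruct (Nat.eqb y x); reflexivity.
  - unfold override. destruct (th x) eqn:E; [|reflexivity].
    apply subst_closed. eapply Hth. exact E.
Qed.

(** * Well-formed contracts and their transitions *)

Lemma gd_not_free (t : T) : forall y, ~ In y (fv t) -> gd y t.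
Proof.
  induction t as [| | | | | | |x k IHk|x] using term_nested_ind; intros y Hy; simpl; auto.
  - destruct (Nat.eq_dec x y) as [|Hne]; [left; assumption|].
    right. apply IHk. intros Hk. apply Hy, in_fv_Mu. auto.
  - intros ->. apply Hy. left. reflexivity.
Qed.

Lemma gd_subst (t : T) : forall (s : sb) y,
  range_of (@closed BT L) s -> s y = None -> gd y t -> gd y (subst s t).
Proof.
  induction t as [| | | | | | |x k IHk|x]
    using term_nested_ind; intros s y Hs Hy Hgd; simpl in *; auto.
  - destruct Hgd as [->|Hgd]; [left; reflexivity|].
    right. apply IHk; [apply range_of_rem; exact Hs | | exact Hgd].
    unfold rem. destruct (Nat.eqb y x); auto.
  - destruct (s x) eqn:E; [|exact Hgd].
    apply gd_not_free. apply Hs in E. unfold closed in E. rewrite E. auto.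
Qed.

Lemma guarded_subst (t : T) : forall s : sb,
  range_of (@closed BT L) s -> range_of (@guarded BT L) s -> guarded t -> guarded (subst s t).
Proof.
  induction t as [|b k IHk|b k IHk|m k IHm IHk|m k IHm IHk|bs IH|bs IH|x k IHk|x]
    using term_nested_ind; intros s Hc Hg Ht; simpl in *; auto.
  - destruct Ht. split; auto.
  - destruct Ht. split; auto.
  - eapply all_br_map; [|exact Ht]. intros l k Hi. apply (IH l k Hi); auto.
  - eapply all_br_map; [|exact Ht]. intros l k Hi. apply (IH l k Hi); auto.
  - destruct Ht as [Hgd Hk]. split.
    + apply gd_subst; [apply range_of_rem; exact Hc | | exact Hgd].
      unfold rem. rewrite Nat.eqb_refl. reflexivity.
    + apply IHk; auto using range_of_rem.
  - destruct (s x) eqn:E; [exact (Hg x t E) | exact I].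
Qed.

Lemma wf_subst (t : T) : forall s : sb, range_of (@wf BT L) s -> wf t -> wf (subst s t).
Proof.
  induction t as [|b k IHk|b k IHk|m k IHm IHk|m k IHm IHk|bs IH|bs IH|x k IHk|x]
    using term_nested_ind; intros s Hs Ht; simpl in *; auto.
  - destruct Ht. split; auto.
  - destruct Ht. split; auto.
  - apply wf_branches_map; [|exact Ht]. intros l k Hi. apply (IH l k Hi); auto.
  - apply wf_branches_map; [|exact Ht]. intros l k Hi. apply (IH l k Hi); auto.
  - apply IHk; auto using range_of_rem.
  - destruct (s x) eqn:E; [exact (Hs x t E) | exact I].
Qed.

Lemma SC_subst (s : sb) (t : T) :
  range_of (@SC BT L) s -> covers s t -> guarded t -> wf t -> SC (subst s t).
Proof.
  intros Hs Hcov Hg Hw.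
  assert (Hc : range_of (@closed BT L) s) by (intros y u E; apply (Hs y u E)).
  split; [|split].
  - apply closed_subst; assumption.
  - apply guarded_subst; auto. intros y u E. apply (Hs y u E).
  - apply wf_subst; auto. intros y u E. apply (Hs y u E).
Qed.

Lemma SC_unfold x (k : T) : SC (Mu x k) -> SC (Defs.unfold x k).
Proof.
  intros HS. pose proof HS as (Hc & [_ Hg] & Hw).
  apply SC_subst; auto.
  - apply range_of_upd; [apply range_of_eps | exact HS].
  - intros y Hy. rewrite (closed_Mu_fv x k y Hc Hy). unfold upd.
    rewrite Nat.eqb_refl. discriminate.
Qed.

Lemma SC_of_fv_incl (t u : T) : SC t -> guarded u -> wf u -> incl (fv u) (fv t) -> SC u.
Proof.
  intros (Hc & _ & _) Hg Hw Hincl. split; [|split; assumption].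
  exact (closed_incl t u Hc Hincl).
Qed.

Lemma SC_Ext_branch (bs : list (L * T)) l k : SC (Ext bs) -> In (l, k) bs -> SC k.
Proof.
  intros HS Hi. pose proof HS as (_ & Hg & _ & _ & Hw).
  apply (SC_of_fv_incl (Ext bs)); [exact HS | eapply all_br_In; eauto | eapply all_br_In; eauto |].
  intros y Hy. apply in_fv_branches. eauto.
Qed.

Lemma SC_IntC_branch (bs : list (L * T)) l k : SC (IntC bs) -> In (l, k) bs -> SC k.
Proof. intros (Hc & Hg & Hw). apply SC_Ext_branch. split; auto. Qed.

Lemma SC_InM_msg (m k : T) : SC (InM m k) -> SC m.
Proof.
  intros HS. pose proof HS as (_ & [Hg _] & [Hw _]).
  apply (SC_of_fv_incl (InM m k)); auto. intros y Hy. apply in_or_app. auto.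
Qed.

Lemma SC_OutM_msg (m k : T) : SC (OutM m k) -> SC m.
Proof.
  intros HS. pose proof HS as (_ & [Hg _] & [Hw _]).
  apply (SC_of_fv_incl (OutM m k)); auto. intros y Hy. apply in_or_app. auto.
Qed.

Lemma SC_vstep (r r' : T) a : SC r -> vstep r a r' -> SC r'.
Proof.
  intros HS Hr. destruct Hr as [b k|b k|m k|m k|bs l k Hi|l k].
  - destruct HS as (Hc & Hg & Hw). split; auto.
  - destruct HS as (Hc & Hg & Hw). split; auto.
  - pose proof HS as (_ & [_ Hg] & [_ Hw]).
    apply (SC_of_fv_incl (InM m k)); auto. intros y Hy. apply in_or_app. auto.
  - pose proof HS as (_ & [_ Hg] & [_ Hw]).
    apply (SC_of_fv_incl (OutM m k)); auto. intros y Hy. apply in_or_app. auto.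
  - eapply SC_Ext_branch; eauto.
  - eapply SC_IntC_branch; [exact HS | left; reflexivity].
Qed.

Lemma SC_tstep (r r' : T) : SC r -> tstep r r' -> SC r'.
Proof.
  intros HS Hr. destruct Hr as [bs l k _ Hi|x k]; [|apply SC_unfold; exact HS].
  pose proof (SC_IntC_branch bs l k HS Hi) as (Hc & Hg & Hw).
  split; [|split]; simpl.
  - unfold closed in *. simpl. rewrite Hc. reflexivity.
  - auto.
  - split; [discriminate|]. split; [constructor; [intros []|constructor]|]. auto.
Qed.

(** * The dual *)

Lemma mclo_ext (t : T) : forall s s' : sb,
  (forall y, In y (fv t) -> s y = s' y) -> mclo s t = mclo s' t.
Proof.
  induction t as [|b k IHk|b k IHk|m k IHm IHk|m k IHm IHk|bs IH|bs IH|x k IHk|x]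
    using term_nested_ind; intros s s' Hs; simpl in *; try (f_equal; auto; fail).
  - f_equal; [apply subst_ext | apply IHk]; intros y Hy; apply Hs, in_or_app; auto.
  - f_equal; [apply subst_ext | apply IHk]; intros y Hy; apply Hs, in_or_app; auto.
  - f_equal. apply map_br_ext. intros l k Hi. apply (IH l k Hi).
    intros y Hy. apply Hs, in_fv_branches. eauto.
  - f_equal. apply map_br_ext. intros l k Hi. apply (IH l k Hi).
    intros y Hy. apply Hs, in_fv_branches. eauto.
  - f_equal. apply IHk. intros y Hy. unfold upd.
    destruct (Nat.eqb_spec y x); [|apply Hs, in_fv_Mu; auto].
    change (Some (subst s (Mu x k)) = Some (subst s' (Mu x k))).
    f_equal. apply subst_ext. exact Hs.
Qed.

Lemma mclo_closed (s : sb) (t : T) : closed t -> mclo s t = mcl t.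
Proof. intros Hc. apply mclo_ext. unfold closed in Hc. rewrite Hc. contradiction. Qed.

Lemma mcl_Mu x (k : T) : mcl (Mu x k) = Mu x (mclo (upd (eps BT L) x (Mu x k)) k).
Proof.
  unfold mcl. simpl. rewrite (subst_empty (rem (eps BT L) x) k); [reflexivity|].
  intros y. unfold rem. destruct (Nat.eqb y x); reflexivity.
Qed.

Lemma mclo_subst (k : T) : forall th et : sb,
  range_of (@closed BT L) th -> range_of (@closed BT L) et -> covers (override th et) k ->
  mclo et (subst th k) = subst (map_range (@mcl BT L) th) (mclo (override th et) k).
Proof.
  induction k as [|b k IHk|b k IHk|m k IHm IHk|m k IHm IHk|bs IH|bs IH|x k IHk|x]
    using term_nested_ind; intros th et Hth Het Hcov; simpl in *; try (f_equal; auto; fail).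
  - rewrite subst_subst, (subst_closed _ (subst _ m)) by
      (try apply closed_subst; try apply range_of_override; auto;
       intros y Hy; apply Hcov, in_or_app; auto).
    f_equal. apply IHk; auto. intros y Hy. apply Hcov, in_or_app. auto.
  - rewrite subst_subst, (subst_closed _ (subst _ m)) by
      (try apply closed_subst; try apply range_of_override; auto;
       intros y Hy; apply Hcov, in_or_app; auto).
    f_equal. apply IHk; auto. intros y Hy. apply Hcov, in_or_app. auto.
  - f_equal. rewrite !map_br_map. apply map_br_ext. intros l k Hi.
    apply (IH l k Hi); auto. intros y Hy. apply Hcov, in_fv_branches. eauto.
  - f_equal. rewrite !map_br_map. apply map_br_ext. intros l k Hi.
    apply (IH l k Hi); auto. intros y Hy. apply Hcov, in_fv_branches. eauto.
  - f_equal.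
    change (Mu x (subst (rem et x) (subst (rem th x) k))) with (subst et (subst th (Mu x k))).
    change (Mu x (subst (rem (override th et) x) k)) with (subst (override th et) (Mu x k)).
    rewrite subst_subst by exact Hth.
    set (W := subst (override th et) (Mu x k)).
    assert (HW : closed W) by (apply closed_subst; [apply range_of_override|]; auto).
    rewrite IHk, (mclo_ext k _ (upd (override th et) x W)).
    + apply subst_ext. intros y _. unfold map_range, rem. destruct (Nat.eqb y x); reflexivity.
    + intros y _. unfold override, rem, upd. destruct (Nat.eqb y x); reflexivity.
    + apply range_of_rem. exact Hth.
    + apply range_of_upd; assumption.
    + intros y Hy. unfold override, rem, upd. destruct (Nat.eqb_spec y x); [discriminate|].
      apply Hcov, in_fv_Mu. auto.
  - unfold map_range. destruct (th x) eqn:E; simpl; [|reflexivity].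
    apply mclo_closed. eapply Hth. exact E.
Qed.

Fixpoint closed_msgs (t : T) : Prop :=
  match t with
  | One | Var _ _ _ => True
  | InT _ k | OutT _ k | Mu _ k => closed_msgs k
  | InM m k | OutM m k => closed m /\ closed_msgs k
  | Ext bs | IntC bs => all_br closed_msgs bs
  end.

Lemma closed_msgs_mclo (t : T) : forall s : sb,
  range_of (@closed BT L) s -> covers s t -> closed_msgs (mclo s t).
Proof.
  induction t as [|b k IHk|b k IHk|m k IHm IHk|m k IHm IHk|bs IH|bs IH|x k IHk|x]
    using term_nested_ind; intros s Hs Hcov; simpl in *; auto.
  - split; [apply closed_subst | apply IHk]; auto; intros y Hy; apply Hcov, in_or_app; auto.
  - split; [apply closed_subst | apply IHk]; auto; intros y Hy; apply Hcov, in_or_app; auto.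
  - apply all_br_intro. intros l k' Hi. apply In_map_br in Hi as (k & Hi & ->).
    apply (IH l k Hi); auto. intros y Hy. apply Hcov, in_fv_branches. eauto.
  - apply all_br_intro. intros l k' Hi. apply In_map_br in Hi as (k & Hi & ->).
    apply (IH l k Hi); auto. intros y Hy. apply Hcov, in_fv_branches. eauto.
  - apply IHk.
    + apply range_of_upd; [assumption|]. apply (closed_subst s (Mu x k)); assumption.
    + intros y Hy. unfold upd. destruct (Nat.eqb_spec y x); [discriminate|].
      apply Hcov, in_fv_Mu. auto.
Qed.

Lemma bar_subst (t : T) : forall th : sb,
  closed_msgs t -> bar (subst th t) = subst (map_range (@bar BT L) th) (bar t).
Proof.
  induction t as [|b k IHk|b k IHk|m k IHm IHk|m k IHm IHk|bs IH|bs IH|x k IHk|x]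
    using term_nested_ind; intros th Hmsg; simpl in *; try (f_equal; auto; fail).
  - destruct Hmsg as [Hm Hk]. rewrite !(subst_closed _ m Hm). f_equal. auto.
  - destruct Hmsg as [Hm Hk]. rewrite !(subst_closed _ m Hm). f_equal. auto.
  - f_equal. rewrite !map_br_map. apply map_br_ext. intros l k Hi.
    apply (IH l k Hi). eapply all_br_In; eauto.
  - f_equal. rewrite !map_br_map. apply map_br_ext. intros l k Hi.
    apply (IH l k Hi). eapply all_br_In; eauto.
  - f_equal. rewrite IHk by exact Hmsg. apply subst_ext. intros y _.
    unfold map_range, rem. destruct (Nat.eqb y x); reflexivity.
  - unfold map_range. destruct (th x); reflexivity.
Qed.

Lemma dual_Mu x (k : T) :
  dual (Mu x k) = Mu x (bar (mclo (upd (eps BT L) x (Mu x k)) k)).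
Proof. unfold dual. rewrite mcl_Mu. reflexivity. Qed.

Lemma dual_unfold x (k : T) : closed (Mu x k) ->
  dual (Defs.unfold x k) = Defs.unfold x (bar (mclo (upd (eps BT L) x (Mu x k)) k)).
Proof.
  intros Hc. set (th := upd (eps BT L) x (Mu x k)). set (C := mclo th k).
  assert (Hth : range_of (@closed BT L) th)
    by (apply range_of_upd; [apply range_of_eps | exact Hc]).
  assert (Hcov : covers th k).
  { intros y Hy. rewrite (closed_Mu_fv x k y Hc Hy). unfold th, upd.
    rewrite Nat.eqb_refl. discriminate. }
  unfold dual, mcl, Defs.unfold. fold th.
  rewrite mclo_subst; [| exact Hth | apply range_of_eps |].
  2: { intros y Hy. unfold override.
       destruct (th y) eqn:E; [discriminate | destruct (Hcov y Hy E)]. }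
  rewrite (mclo_ext k (override th (eps BT L)) th) by
    (intros y _; unfold override; destruct (th y); reflexivity).
  fold C.
  rewrite (subst_ext C _ (upd (eps BT L) x (Mu x C))).
  2: { intros y _. unfold map_range, th, upd. destruct (Nat.eqb y x); [|reflexivity].
       simpl. rewrite mcl_Mu. reflexivity. }
  rewrite bar_subst by (apply closed_msgs_mclo; assumption).
  apply subst_ext. intros y _. unfold map_range, upd. destruct (Nat.eqb y x); reflexivity.
Qed.

Lemma dual_InM (m k : T) : dual (InM m k) = OutM m (dual k).
Proof. unfold dual, mcl. simpl. rewrite subst_empty by reflexivity. reflexivity. Qed.

Lemma dual_OutM (m k : T) : dual (OutM m k) = InM m (dual k).
Proof. unfold dual, mcl. simpl. rewrite subst_empty by reflexivity. reflexivity. Qed.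

Lemma dual_Ext (bs : list (L * T)) : dual (Ext bs) = IntC (map_br (@dual BT L) bs).
Proof. unfold dual, mcl. simpl. rewrite map_br_map. reflexivity. Qed.

Lemma dual_IntC (bs : list (L * T)) : dual (IntC bs) = Ext (map_br (@dual BT L) bs).
Proof. unfold dual, mcl. simpl. rewrite map_br_map. reflexivity. Qed.

Lemma dual_eq_IntC (t : T) bs' : dual t = IntC bs' ->
  exists bs, t = Ext bs /\ bs' = map_br (@dual BT L) bs.
Proof.
  destruct t; rewrite ?dual_InM, ?dual_OutM, ?dual_Ext, ?dual_IntC, ?dual_Mu; try discriminate.
  intros [= <-]. eauto.
Qed.

Lemma fv_bar (t : T) : fv (bar t) = fv t.
Proof.
  induction t as [| | | | |bs IH|bs IH| |] using term_nested_ind; simpl; try congruence;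
    apply fv_branches_map; exact IH.
Qed.

Lemma gd_bar (t : T) y : gd y t -> gd y (bar t).
Proof. induction t using term_nested_ind; simpl; tauto. Qed.

Lemma guarded_bar (t : T) : guarded t -> guarded (bar t).
Proof.
  induction t as [|b k IHk|b k IHk|m k IHm IHk|m k IHm IHk|bs IH|bs IH|x k IHk|x]
    using term_nested_ind; simpl; auto; try tauto.
  - apply all_br_map. exact IH.
  - apply all_br_map. exact IH.
  - intros [Hgd Hk]. split; [apply gd_bar|]; auto.
Qed.

Lemma wf_bar (t : T) : wf t -> wf (bar t).
Proof.
  induction t as [|b k IHk|b k IHk|m k IHm IHk|m k IHm IHk|bs IH|bs IH|x k IHk|x]
    using term_nested_ind; simpl; auto; try tauto.
  - apply wf_branches_map. exact IH.
  - apply wf_branches_map. exact IH.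
Qed.

Lemma gd_mclo (t : T) : forall (s : sb) y, gd y t -> gd y (mclo s t).
Proof. induction t using term_nested_ind; simpl; firstorder. Qed.

Lemma fv_mclo (t : T) : forall s : sb,
  range_of (@closed BT L) s -> covers s t -> incl (fv (mclo s t)) (fv t).
Proof.
  induction t as [|b k IHk|b k IHk|m k IHm IHk|m k IHm IHk|bs IH|bs IH|x k IHk|x]
    using term_nested_ind; intros s Hs Hcov y Hy; simpl in *;
    try assumption; try (apply (IHk s); auto; fail).
  - apply in_app_or in Hy as [Hy|Hy]; apply in_or_app; [left | right].
    + eapply fv_subst; eauto.
    + apply (IHk s); auto. intros z Hz. apply Hcov, in_or_app. auto.
  - apply in_app_or in Hy as [Hy|Hy]; apply in_or_app; [left | right].
    + eapply fv_subst; eauto.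
    + apply (IHk s); auto. intros z Hz. apply Hcov, in_or_app. auto.
  - apply in_fv_branches in Hy as (l & k' & Hi & Hy). apply In_map_br in Hi as (k & Hi & ->).
    apply in_fv_branches. exists l, k. split; [exact Hi|].
    apply (IH l k Hi s); auto. intros z Hz. apply Hcov, in_fv_branches. eauto.
  - apply in_fv_branches in Hy as (l & k' & Hi & Hy). apply In_map_br in Hi as (k & Hi & ->).
    apply in_fv_branches. exists l, k. split; [exact Hi|].
    apply (IH l k Hi s); auto. intros z Hz. apply Hcov, in_fv_branches. eauto.
  - apply in_fv_Mu in Hy as [Hy Hne]. apply in_fv_Mu. split; [|exact Hne].
    apply (IHk (upd s x (subst s (Mu x k)))); [| apply covers_upd_Mu; exact Hcov | exact Hy].
    apply range_of_upd; [exact Hs|]. apply closed_subst; assumption.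
Qed.

Lemma wf_mclo (t : T) : forall s : sb, range_of (@wf BT L) s -> wf t -> wf (mclo s t).
Proof.
  induction t as [|b k IHk|b k IHk|m k IHm IHk|m k IHm IHk|bs IH|bs IH|x k IHk|x]
    using term_nested_ind; intros s Hs Ht; simpl in *; auto.
  - destruct Ht. split; [apply wf_subst | apply IHk]; auto.
  - destruct Ht. split; [apply wf_subst | apply IHk]; auto.
  - apply wf_branches_map; [|exact Ht]. intros l k Hi. apply (IH l k Hi); auto.
  - apply wf_branches_map; [|exact Ht]. intros l k Hi. apply (IH l k Hi); auto.
  - apply IHk; [|exact Ht]. apply range_of_upd; [exact Hs|].
    apply (wf_subst (Mu x k)); assumption.
Qed.

Lemma guarded_mclo (t : T) : forall s : sb,
  range_of (@SC BT L) s -> covers s t -> guarded t -> wf t -> guarded (mclo s t).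
Proof.
  assert (Hclosed : forall s : sb, range_of (@SC BT L) s -> range_of (@closed BT L) s)
    by (intros s Hs y u E; apply (Hs y u E)).
  assert (Hguarded : forall s : sb, range_of (@SC BT L) s -> range_of (@guarded BT L) s)
    by (intros s Hs y u E; apply (Hs y u E)).
  induction t as [|b k IHk|b k IHk|m k IHm IHk|m k IHm IHk|bs IH|bs IH|x k IHk|x]
    using term_nested_ind; intros s Hs Hcov Hg Hw; simpl in *; auto.
  - destruct Hg, Hw. split; [apply guarded_subst | apply IHk]; auto.
    intros y Hy. apply Hcov, in_or_app. auto.
  - destruct Hg, Hw. split; [apply guarded_subst | apply IHk]; auto.
    intros y Hy. apply Hcov, in_or_app. auto.
  - destruct Hw as (_ & _ & Hw). apply all_br_intro.
    intros l k' Hi. apply In_map_br in Hi as (k & Hi & ->).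
    apply (IH l k Hi);
      [exact Hs | | exact (all_br_In _ _ _ _ Hg Hi) | exact (all_br_In _ _ _ _ Hw Hi)].
    intros y Hy. apply Hcov, in_fv_branches. eauto.
  - destruct Hw as (_ & _ & Hw). apply all_br_intro.
    intros l k' Hi. apply In_map_br in Hi as (k & Hi & ->).
    apply (IH l k Hi);
      [exact Hs | | exact (all_br_In _ _ _ _ Hg Hi) | exact (all_br_In _ _ _ _ Hw Hi)].
    intros y Hy. apply Hcov, in_fv_branches. eauto.
  - destruct Hg as [Hgd Hg]. split; [apply gd_mclo; exact Hgd|].
    apply IHk; auto using covers_upd_Mu.
    apply range_of_upd; [exact Hs|]. apply (SC_subst s (Mu x k)); simpl; auto.
Qed.

Lemma SC_mcl (t : T) : SC t -> SC (mcl t).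
Proof.
  intros (Hc & Hg & Hw).
  assert (Hcov : covers (eps BT L) t)
    by (unfold closed in Hc; intros y; rewrite Hc; contradiction).
  split; [|split].
  - apply (closed_incl t); [exact Hc|]. apply fv_mclo; auto using range_of_eps.
  - apply guarded_mclo; auto using range_of_eps.
  - apply wf_mclo; auto using range_of_eps.
Qed.

Lemma SC_dual (t : T) : SC t -> SC (dual t).
Proof.
  intros HS. destruct (SC_mcl t HS) as (Hc & Hg & Hw). unfold dual. split; [|split].
  - unfold closed. rewrite fv_bar. exact Hc.
  - apply guarded_bar. exact Hg.
  - apply wf_bar. exact Hw.
Qed.

(** * Unfoldings and tau-derivatives *)

Definition is_mu (t : T) : Prop := exists x k, t = Mu x k.

Lemma is_mu_dual (t : T) : is_mu (dual t) -> is_mu t.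
Proof.
  intros (x & k & E). destruct t;
    rewrite ?dual_InM, ?dual_OutM, ?dual_Ext, ?dual_IntC, ?dual_Mu in E; try discriminate.
  eexists; eexists; reflexivity.
Qed.

Lemma vstep_not_mu (r r' : T) a : vstep r a r' -> ~ is_mu r.
Proof. intros Hr (x & k & ->). inversion Hr. Qed.

Inductive unfolds : T -> T -> Prop :=
| unfolds_refl t : unfolds t t
| unfolds_Mu x k r : unfolds (Defs.unfold x k) r -> unfolds (Mu x k) r.

Lemma unfolds_det (t r1 r2 : T) :
  unfolds t r1 -> unfolds t r2 -> ~ is_mu r1 -> ~ is_mu r2 -> r1 = r2.
Proof.
  intros H1. revert r2. induction H1 as [t|x k r1 H1 IH]; intros r2 H2 N1 N2.
  - inversion H2; subst; [reflexivity|]. destruct N1. eexists; eexists; reflexivity.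
  - inversion H2; subst; [|auto]. destruct N2. eexists; eexists; reflexivity.
Qed.

Lemma unfolds_SC (t r : T) : unfolds t r -> SC t -> SC r.
Proof. induction 1; auto using SC_unfold. Qed.

Lemma unfolds_dual (t r : T) : unfolds t r -> SC t -> unfolds (dual t) (dual r).
Proof.
  induction 1 as [|x k r H IH]; intros HS; [constructor|].
  rewrite dual_Mu. constructor. rewrite <- dual_unfold by (apply HS).
  apply IH, SC_unfold, HS.
Qed.

Lemma unfolds_dual_head (t u v : T) : SC t ->
  unfolds t u -> unfolds (dual t) v -> ~ is_mu u -> ~ is_mu v -> v = dual u.
Proof.
  intros HS Hu Hv Nu Nv.
  eapply unfolds_det; [exact Hv | apply unfolds_dual; assumption | exact Nv |].
  intros H. apply Nu, is_mu_dual, H.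
Qed.

Notation taus := (clos_refl_trans T (@tstep BT L)).

Lemma SC_taus (t r : T) : taus t r -> SC t -> SC r.
Proof. induction 1; eauto using SC_tstep. Qed.

Definition chooses (u r : T) : Prop :=
  r = u \/ exists bs l k, u = IntC bs /\ In (l, k) bs /\ r = IntC [(l, k)].

Lemma chooses_not_mu (u r : T) : chooses u r -> ~ is_mu r -> ~ is_mu u.
Proof.
  intros [->|(bs & l & k & -> & _)] Nr (x & j & E); [apply Nr; exists x, j; exact E | discriminate].
Qed.

Lemma taus_unfolds_chooses (t r : T) : taus t r -> exists u, unfolds t u /\ chooses u r.
Proof.
  intros H. apply clos_rt_rt1n in H.
  induction H as [t|t t' r Ht _ (u & Hu & Hch)].
  - exists t. split; [constructor | left; reflexivity].
  - destruct Ht as [bs l k _ Hi|x k].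
    + exists (IntC bs). split; [constructor|]. right. exists bs, l, k. split; [reflexivity|].
      split; [exact Hi|]. inversion Hu; subst.
      destruct Hch as [->|(bs' & l' & k' & E & Hi' & ->)]; [reflexivity|].
      injection E as <-. destruct Hi' as [[= -> ->]|[]]. reflexivity.
    + exists u. split; [constructor; exact Hu | exact Hch].
Qed.

(** * Compliance of dual pairs *)

Lemma vstep_Ext_inv (bs : list (L * T)) a k :
  vstep (Ext bs) a k -> exists l, a = aInL BT l /\ In (l, k) bs.
Proof. intros H. inversion H. eauto. Qed.

Lemma vstep_IntC_inv (bs : list (L * T)) a k :
  vstep (IntC bs) a k -> exists l, a = aOutL BT l /\ bs = [(l, k)].
Proof. intros H. inversion H. eauto. Qed.

Lemma vstep_dual (u r' s' : T) a1 a2 : vstep u a1 r' -> vstep (dual u) a2 s' -> s' = dual r'.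
Proof.
  intros Hu Hs. destruct Hu as [b k|b k|m k|m k|bs l k Hi|l k].
  - inversion Hs. reflexivity.
  - inversion Hs. reflexivity.
  - rewrite dual_InM in Hs. inversion Hs. reflexivity.
  - rewrite dual_OutM in Hs. inversion Hs. reflexivity.
  - rewrite dual_Ext in Hs. apply vstep_IntC_inv in Hs as (l' & _ & Hbs).
    destruct bs as [|[l0 k0] [|p bs]]; try discriminate.
    injection Hbs as _ <-. destruct Hi as [[= _ <-]|[]]. reflexivity.
  - rewrite dual_IntC in Hs. apply vstep_Ext_inv in Hs as (l' & _ & [[= _ <-]|[]]).
    reflexivity.
Qed.

Lemma chooses_sync leb B (u r s r' s' : T) a1 a2 : SC u ->
  chooses u r -> chooses (dual u) s -> vstep r a1 r' -> vstep s a2 s' -> compat leb B a1 a2 ->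
  s' = dual r'.
Proof.
  intros HS [->|(bs & l & k & -> & Hi & ->)] [->|(bs' & l' & k' & Eu & Hi' & ->)] Hr Hs Hc.
  - exact (vstep_dual _ _ _ _ _ Hr Hs).
  - apply dual_eq_IntC in Eu as (bs & -> & ->).
    apply vstep_Ext_inv in Hr as (l1 & -> & Hr).
    apply vstep_IntC_inv in Hs as (l2 & -> & [= <- <-]).
    simpl in Hc. subst l1. apply In_map_br in Hi' as (k0 & Hk0 & ->).
    pose proof HS as (_ & _ & _ & Hnd & _). f_equal. exact (NoDup_fst_In_eq bs l' k0 r' Hnd Hk0 Hr).
  - rewrite dual_IntC in Hs.
    apply vstep_IntC_inv in Hr as (l1 & -> & [= <- <-]).
    apply vstep_Ext_inv in Hs as (l2 & -> & Hs).
    simpl in Hc. subst l2. apply In_map_br in Hs as (k0 & Hk0 & ->).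
    pose proof HS as (_ & _ & _ & Hnd & _). f_equal. exact (NoDup_fst_In_eq bs l k0 k Hnd Hk0 Hi).
  - rewrite dual_IntC in Eu. discriminate.
Qed.

Lemma dual_pair_progress leb B (u : T) :
  (forall b, leb b b) -> (forall m, SC m -> B m m) -> SC u -> ~ is_mu u ->
  (exists r' s', pair_tau leb B u (dual u) r' s') \/ (ticks u /\ ticks (dual u)).
Proof.
  intros Hleb HB HS Nu.
  destruct u as [|b k|b k|m k|m k|bs|bs|x k|x]; [right; split; reflexivity | left ..].
  - exists k, (dual k). eapply pt_sync; [constructor | constructor | apply Hleb].
  - exists k, (dual k). eapply pt_sync; [constructor | constructor | apply Hleb].
  - exists k, (dual k). rewrite dual_InM.
    eapply pt_sync; [constructor | constructor | apply HB; eapply SC_InM_msg; eauto].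
  - exists k, (dual k). rewrite dual_OutM.
    eapply pt_sync; [constructor | constructor | apply HB; eapply SC_OutM_msg; eauto].
  - rewrite dual_Ext. destruct bs as [|[l k] [|p bs]].
    + destruct HS as (_ & _ & Hne & _). contradiction.
    + exists k, (dual k).
      eapply pt_sync; [apply vs_ext; left; reflexivity | apply vs_outL | reflexivity].
    + eexists; eexists. apply pt_r.
      apply ts_int with (l := l) (k := dual k); simpl; auto with arith.
  - rewrite dual_IntC. destruct bs as [|[l k] [|p bs]].
    + destruct HS as (_ & _ & Hne & _). contradiction.
    + exists k, (dual k).
      eapply pt_sync; [apply vs_outL | apply vs_ext; left; reflexivity | reflexivity].
    + eexists; eexists. apply pt_l.
      apply ts_int with (l := l) (k := k); simpl; auto with arith.
  - destruct Nu. exists x, k. reflexivity.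
  - destruct HS as (Hc & _). discriminate.
Qed.

Lemma chooses_progress leb B (u r s : T) :
  (forall b, leb b b) -> (forall m, SC m -> B m m) -> SC u -> ~ is_mu u ->
  chooses u r -> chooses (dual u) s ->
  (exists r' s', pair_tau leb B r s r' s') \/ (ticks r /\ ticks s).
Proof.
  intros Hleb HB HS Nu [->|(bs & l & k & -> & Hi & ->)] [->|(bs' & l' & k' & Eu & Hi' & ->)].
  - apply dual_pair_progress; assumption.
  - apply dual_eq_IntC in Eu as (bs & -> & ->). apply In_map_br in Hi' as (k0 & Hk0 & ->).
    left. exists k0, (dual k0).
    eapply pt_sync; [apply vs_ext; exact Hk0 | apply vs_outL | reflexivity].
  - left. exists k, (dual k). rewrite dual_IntC.
    eapply pt_sync; [apply vs_outL | apply vs_ext, In_map_br; eauto | reflexivity].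
  - rewrite dual_IntC in Eu. discriminate.
Qed.

Lemma dual_taus_head (t r s : T) : SC t -> taus t r -> taus (dual t) s -> ~ is_mu r -> ~ is_mu s ->
  exists u, SC u /\ ~ is_mu u /\ chooses u r /\ chooses (dual u) s.
Proof.
  intros HS Hr Hs Nr Ns.
  destruct (taus_unfolds_chooses t r Hr) as (u & Hu & Hur).
  destruct (taus_unfolds_chooses _ s Hs) as (v & Hv & Hvs).
  pose proof (chooses_not_mu u r Hur Nr) as Nu.
  pose proof (chooses_not_mu v s Hvs Ns) as Nv.
  rewrite (unfolds_dual_head t u v HS Hu Hv Nu Nv) in Hvs.
  exists u. split; [exact (unfolds_SC t u Hu HS) | auto].
Qed.

Definition dual_derivatives (r s : T) : Prop := exists t, SC t /\ taus t r /\ taus (dual t) s.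

Lemma dual_derivatives_compliance leb B :
  (forall b, leb b b) -> (forall m, SC m -> B m m) -> is_compliance leb B dual_derivatives.
Proof.
  intros Hleb HB r s (t & HS & Hr & Hs).
  pose proof (SC_taus t r Hr HS) as HSr.
  pose proof (SC_taus _ s Hs (SC_dual t HS)) as HSs.
  split; [exact HSr | split; [exact HSs | split]].
  - intros Hstuck.
    assert (Nr : ~ is_mu r) by (intros (x & k & ->); apply Hstuck; do 2 eexists; apply pt_l, ts_mu).
    assert (Ns : ~ is_mu s) by (intros (x & k & ->); apply Hstuck; do 2 eexists; apply pt_r, ts_mu).
    destruct (dual_taus_head t r s HS Hr Hs Nr Ns) as (u & HSu & Nu & Hur & Hus).
    destruct (chooses_progress leb B u r s Hleb HB HSu Nu Hur Hus) as [Hmove|Hticks];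
      [contradiction | exact Hticks].
  - intros r' s' Hstep. destruct Hstep as [r' Hr'|s' Hs'|r' s' a1 a2 Hr' Hs' Hc].
    + exists t. split; [exact HS|]. split; [|exact Hs].
      eapply rt_trans; [exact Hr | apply rt_step, Hr'].
    + exists t. split; [exact HS|]. split; [exact Hr|].
      eapply rt_trans; [exact Hs | apply rt_step, Hs'].
    + destruct (dual_taus_head t r s HS Hr Hs (vstep_not_mu _ _ _ Hr') (vstep_not_mu _ _ _ Hs'))
        as (u & HSu & _ & Hur & Hus).
      rewrite (chooses_sync leb B u r s r' s' a1 a2 HSu Hur Hus Hr' Hs' Hc).
      exists r'. split; [exact (SC_vstep r r' a1 HSr Hr')|]. split; apply rt_refl.
Qed.

End Contracts.

Theorem mainTheorem7 (BT L : Type) (leb : BT -> BT -> Prop)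
    (leb_refl : forall t, leb t t)
    (leb_trans : forall t1 t2 t3, leb t1 t2 -> leb t2 t3 -> leb t1 t3)
    (B : term BT L -> term BT L -> Prop)
    (B_refl : forall s, SC s -> B s s)
    (B_trans : forall s1 s2 s3, SC s1 -> SC s2 -> SC s3 -> B s1 s2 -> B s2 s3 -> B s1 s3)
    (rho : term BT L) :
  SC rho -> compliant leb B rho (dual rho).
Proof.
  intros HS. exists (dual_derivatives BT L). split.
  - exact (dual_derivatives_compliance BT L leb B leb_refl B_refl).
  - exists rho. split; [|split]; [exact HS | apply rt_refl | apply rt_refl].
Qed.
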